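(* Let $p \in \{1, \infty\}$ and let $f:\mathbb{R}^n \to \mathbb{R}^n$ be a Lipschitz, differentiable vector field. Then $f$ is weakly infinitesimally contracting (WIC) with respect to the $p$-norm if and only if there exist a real number $\gamma$ and a differentiable Lipschitz map $\phi:\mathbb{R}^n\to\mathbb{R}^n$ with $\|\phi\|_{\mathrm{Lip},p} \le \gamma$ such that \[ f(x) = -\gamma x + \phi(x) \quad \text{for all } x \in \mathbb{R}^n. \]
   Context: For $x\in\mathbb{R}^n$, $\|x\|_1=\sum_i |x_i|$ and $\|x\|_\infty=\max_i |x_i|$; for a matrix $A$, $\|A\|_p=\sup_{x\neq 0}\|Ax\|_p/\|x\|_p$ is the induced norm. The matrix measure (logarithmic norm) of $A\in\mathbb{R}^{n\times n}$ is $\mu_p(A)=\lim_{h\to 0^+}\frac{\|I+hA\|_p-1}{h}$; explicitly $\mu_1(A)=\max_j\big(a_{jj}+\sum_{i\neq j}|a_{ij}|\big)$ and $\mu_\infty(A)=\max_i\big(a_{ii}+\sum_{j\neq i}|a_{ij}|\big)$. $Df(x)$ denotes the Jacobian of $f$ at $x$. A vector field $f$ is WIC with respect to the $p$-norm if $\sup_{x\in\mathbb{R}^n}\mu_p(Df(x))\le 0$. For a differentiable $\phi:\mathbb{R}^n\to\mathbb{R}^n$, its Lipschitz constant with respect to the $p$-norm is $\|\phi\|_{\mathrm{Lip},p}=\sup_{x\in\mathbb{R}^n}\|D\phi(x)\|_p$. *)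

From HB Require Import structures.
From mathcomp Require Import all_boot all_order all_algebra.
From mathcomp Require Import all_classical all_reals all_analysis.
Set Implicit Arguments. Unset Strict Implicit. Unset Printing Implicit Defensive.
Import Order.TTheory GRing.Theory Num.Theory.
Import numFieldNormedType.Exports.
Local Open Scope classical_set_scope.
Local Open Scope ring_scope.

Inductive pnorm := P1 | Pinf.

Section Defs.
Variable R : realType.

Definition vnorm (p : pnorm) (n : nat) (x : 'rV[R]_n) : R :=
  match p with
  | P1 => \sum_(i < n) `|x ord0 i|
  | Pinf => \big[Num.max/0]_(i < n) `|x ord0 i|
  end.

(* matrix acting on column-vector coordinates: (A x)_i = sum_j a_ij x_j;
   with row vectors this is x *m A^T *)
Definition mxapply (n : nat) (A : 'M[R]_n) (x : 'rV[R]_n) : 'rV[R]_n :=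
  x *m A^T.

Definition indnorm (p : pnorm) (n : nat) (A : 'M[R]_n) : R :=
  sup [set vnorm p (mxapply A x) / vnorm p x | x in [set x : 'rV[R]_n | x != 0]].

(* matrix measure (logarithmic norm), explicit formulas *)
Definition mxmeasure (p : pnorm) (n : nat) (A : 'M[R]_n) : R :=
  fine match p with
  | P1 => \big[maxe/-oo%E]_(j < n)
             (A j j + \sum_(i < n | i != j) `|A i j|)%:E
  | Pinf => \big[maxe/-oo%E]_(i < n)
             (A i i + \sum_(j < n | j != i) `|A i j|)%:E
  end.

(* Jacobian in the usual convention: (Df x)_{ij} = d f_i / d x_j.
   (mathcomp's 'J f x satisfies v *m 'J f x = 'd f x v, i.e. it is the
   transpose of the usual Jacobian.) *)
Definition Jac (n : nat) (f : 'rV[R]_n -> 'rV[R]_n) (x : 'rV[R]_n) : 'M[R]_n :=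
  (jacobian f x)^T.

Definition differentiable_everywhere (n : nat) (f : 'rV[R]_n -> 'rV[R]_n) :=
  forall x, differentiable f x.

Definition lipschitz_map (p : pnorm) (n : nat) (f : 'rV[R]_n -> 'rV[R]_n) :=
  exists L : R, forall x y, vnorm p (f x - f y) <= L * vnorm p (x - y).

Definition WIC (p : pnorm) (n : nat) (f : 'rV[R]_n -> 'rV[R]_n) :=
  (ereal_sup [set (mxmeasure p (Jac f x))%:E | x in [set: 'rV[R]_n]] <= 0)%E.

Definition lipconst (p : pnorm) (n : nat) (phi : 'rV[R]_n -> 'rV[R]_n) : \bar R :=
  ereal_sup [set (indnorm p (Jac phi x))%:E | x in [set: 'rV[R]_n]].

End Defs.

(* With the explicit formulas, mu_p(A) <= 0 says that a_jj + sum_(i <> j) |a_ij| <= 0 for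
   every column j (p = 1), resp. the same with rows (p = oo), while ||B||_p is the largest
   l^1-norm of a column (resp. row) of B.  Shifting the diagonal by g adds g to each of
   these terms, and each term is at most the corresponding l^1-norm, with equality when
   the diagonal entry is nonnegative.  Hence mu_p(A) <= 0 whenever ||A + g I||_p <= g, and
   conversely if g >= 0 and the diagonal of A is >= -g.  The entries of the Jacobian of an
   L-Lipschitz map are bounded by L, so gamma := L and phi := f + L id work; conversely
   Df(x) = D phi(x) - gamma I. *)
From HB Require Import structures.
From mathcomp Require Import all_boot all_order all_algebra.
From mathcomp Require Import all_classical all_reals all_analysis.
Set Implicit Arguments. Unset Strict Implicit. Unset Printing Implicit Defensive.
Import Order.TTheory GRing.Theory Num.Theory.
Import numFieldNormedType.Exports.
Local Open Scope classical_set_scope.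
Local Open Scope ring_scope.

Section MatrixMeasure.
Variables (R : realType) (n : nat).
Implicit Types (p : pnorm) (x y : 'rV[R]_n) (A B : 'M[R]_n) (g : R).

Lemma vnorm_ge0 p x : 0 <= vnorm p x.
Proof. by case: p => /=; [apply: sumr_ge0 | apply: bigmax_ge_id]. Qed.

Lemma ler_coord_vnorm p x j : `|x ord0 j| <= vnorm p x.
Proof.
case: p => /=; last exact: le_bigmax.
by rewrite (bigD1 j) //= lerDl sumr_ge0.
Qed.

Lemma vnorm_gt0 p x : x != 0 -> 0 < vnorm p x.
Proof.
move=> x_neq0; have [j xj_neq0] : exists j, x ord0 j != 0.
  apply/existsP; apply: contraNT x_neq0 => /existsPn x0.
  by apply/eqP/rowP => j; rewrite mxE; apply/eqP/negPn/x0.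
by apply: lt_le_trans (ler_coord_vnorm p x j); rewrite normr_gt0.
Qed.

Lemma ler_vnormD p x y : vnorm p (x + y) <= vnorm p x + vnorm p y.
Proof.
case: p => /=.
  by rewrite -big_split /=; apply: ler_sum => i _; rewrite mxE ler_normD.
apply: bigmax_le => [|i _]; first by rewrite addr_ge0 // (vnorm_ge0 Pinf).
by rewrite mxE (le_trans (ler_normD _ _)) // lerD // (ler_coord_vnorm Pinf).
Qed.

Lemma ler_vnormZ p a x : vnorm p (a *: x) <= `|a| * vnorm p x.
Proof.
case: p => /=.
  by rewrite mulr_sumr; apply: ler_sum => i _; rewrite mxE normrM.
apply: bigmax_le => [|i _]; first by rewrite mulr_ge0 // (vnorm_ge0 Pinf).
by rewrite mxE normrM ler_wpM2l // (ler_coord_vnorm Pinf).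
Qed.

Lemma vnorm_delta_le1 p j : vnorm p (delta_mx 0 j : 'rV[R]_n) <= 1.
Proof.
case: p => /=.
  rewrite (bigD1 j) //= mxE !eqxx normr1 big1 ?addr0 // => i /negPf ij.
  by rewrite mxE ij andbF normr0.
by apply: bigmax_le => // i _; rewrite mxE; case: (_ && _); rewrite ?normr1 ?normr0.
Qed.

Lemma mxapplyE A x i : mxapply A x ord0 i = \sum_j A i j * x ord0 j.
Proof. by rewrite mxE; apply: eq_bigr => j _; rewrite mxE mulrC. Qed.

Definition line_norm p B j : R :=
  match p with
  | P1 => \sum_i `|B i j|
  | Pinf => \sum_k `|B j k|
  end.

Lemma line_norm_ge0 p B j : 0 <= line_norm p B j.
Proof. by case: p; apply: sumr_ge0. Qed.

Lemma vnorm_mxapply_le p A g x : 0 <= g -> (forall j, line_norm p A j <= g) ->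
  vnorm p (mxapply A x) <= g * vnorm p x.
Proof.
case: p => /= g_ge0 Ag.
  apply: (@le_trans _ _ (\sum_i \sum_j `|A i j| * `|x ord0 j|)).
    apply: ler_sum => i _; rewrite mxapplyE (le_trans (ler_norm_sum _ _ _)) //.
    by apply: ler_sum => j _; rewrite normrM.
  rewrite exchange_big /= mulr_sumr; apply: ler_sum => j _.
  by rewrite -mulr_suml ler_wpM2r.
apply: bigmax_le => [|i _]; first by rewrite mulr_ge0 // (vnorm_ge0 Pinf).
rewrite mxapplyE (le_trans (ler_norm_sum _ _ _)) //.
apply: (@le_trans _ _ (\sum_j `|A i j| * vnorm Pinf x)).
  by apply: ler_sum => j _; rewrite normrM ler_wpM2l // (ler_coord_vnorm Pinf).
by rewrite -mulr_suml ler_wpM2r // (vnorm_ge0 Pinf).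
Qed.

Lemma indnorm_le p A g : 0 <= g -> (forall x, vnorm p (mxapply A x) <= g * vnorm p x) ->
  indnorm p A <= g.
Proof.
move=> g_ge0 Ag; rewrite /indnorm; set S := [set _ | x in _].
have [->|S_neq0] := eqVneq S set0; first by rewrite sup0.
apply: ge_sup => [|_ [x /= x_neq0 <-]]; first exact/set0P.
by rewrite ler_pdivrMr ?vnorm_gt0.
Qed.

Lemma vnorm_mxapply_le_indnorm p A x : x != 0 -> vnorm p x <= 1 ->
  vnorm p (mxapply A x) <= indnorm p A.
Proof.
move=> x_neq0 x_le1; have x_gt0 := vnorm_gt0 p x_neq0.
pose K := \sum_j line_norm p A j.
have K_ge0 : 0 <= K by apply: sumr_ge0 => j _; apply: line_norm_ge0.
have AK y : vnorm p (mxapply A y) <= K * vnorm p y.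
  apply: vnorm_mxapply_le => // j.
  by rewrite /K (bigD1 j) //= lerDl sumr_ge0 // => k _; apply: line_norm_ge0.
have ratio_le : vnorm p (mxapply A x) / vnorm p x <= indnorm p A.
  apply: ub_le_sup; last by exists x.
  by exists K => _ [y /= y_neq0 <-]; rewrite ler_pdivrMr ?vnorm_gt0 //; apply: AK.
by apply: le_trans _ ratio_le; rewrite ler_pdivlMr // ler_piMr // vnorm_ge0.
Qed.

Lemma line_norm_le_indnorm p A j : line_norm p A j <= indnorm p A.
Proof.
have delta_neq0 : (delta_mx 0 j : 'rV[R]_n) != 0.
  by apply/eqP => /rowP /(_ j); rewrite !mxE !eqxx => /eqP; rewrite oner_eq0.
case: p => /=.
  apply: le_trans _ (vnorm_mxapply_le_indnorm A delta_neq0 (vnorm_delta_le1 _ _)).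
  by rewrite /mxapply -rowE /=; apply: ler_sum => i _; rewrite !mxE.
(* signs of row j, with 1 for zero entries so that s != 0 *)
pose s : 'rV[R]_n := \row_k (if A j k == 0 then 1 else Num.sg (A j k)).
have s_neq0 : s != 0.
  apply/eqP => /rowP /(_ j); rewrite !mxE.
  by case: ifP => [_|Ajj]; apply/eqP; rewrite ?oner_eq0 ?sgr_eq0 ?Ajj.
have s_le1 : vnorm Pinf s <= 1.
  apply: bigmax_le => // k _; rewrite mxE.
  by case: ifP; rewrite ?normr1 // normr_sg; case: (_ != 0).
apply: le_trans _ (vnorm_mxapply_le_indnorm A s_neq0 s_le1).
have sgn_term k : A j k * s ord0 k = `|A j k|.
  by rewrite mxE; case: ifP => [/eqP->|_]; rewrite ?normr0 ?mul0r // mulrC -normrEsg.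
apply: le_trans _ (ler_coord_vnorm _ _ j).
by rewrite mxapplyE (eq_bigr _ (fun k _ => sgn_term k)) ger0_norm ?sumr_ge0.
Qed.

Lemma indnorm_leP p A g : 0 <= g ->
  indnorm p A <= g <-> forall j, line_norm p A j <= g.
Proof.
move=> g_ge0; split=> [Ag j|Ag]; first exact: le_trans (line_norm_le_indnorm p A j) Ag.
by apply: indnorm_le => // x; apply: vnorm_mxapply_le.
Qed.

Definition mxmeasure_term p A j : R :=
  match p with
  | P1 => A j j + \sum_(i < n | i != j) `|A i j|
  | Pinf => A j j + \sum_(k < n | k != j) `|A j k|
  end.

Lemma fine_bigmaxe_le0 (F : 'I_n -> R) :
  fine (\big[maxe/-oo%E]_(j < n) (F j)%:E) <= 0 <-> forall j, F j <= 0.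
Proof.
split=> [F_le0 j|F_le0].
  have [i _ bigE] :=
    @eq_bigmax _ _ _ -oo%E j xpredT (fun j => (F j)%:E) isT (fun i _ => leNye _).
  move: F_le0; rewrite bigE /= => /(le_trans _); apply.
  by rewrite -lee_fin -bigE; apply: le_bigmax.
have : (\big[maxe/-oo%E]_(j < n) (F j)%:E <= 0%:E)%E.
  by apply: bigmax_le => [|j _]; rewrite ?leNye // lee_fin.
by case: (\big[maxe/-oo%E]_(j < n) (F j)%:E) => [r||] //=; rewrite lee_fin.
Qed.

Lemma mxmeasure_le0P p A : mxmeasure p A <= 0 <-> forall j, mxmeasure_term p A j <= 0.
Proof. by case: p; apply: fine_bigmaxe_le0. Qed.

Lemma mxmeasure_term_shift p A g j :
  mxmeasure_term p (A + g%:M) j = mxmeasure_term p A j + g.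
Proof.
case: p => /=; rewrite !mxE eqxx mulr1n addrAC; congr (_ + _ + _);
  by apply: eq_bigr => i /negPf ij; rewrite !mxE ?ij 1?eq_sym ?ij mulr0n addr0.
Qed.

Lemma mxmeasure_term_le_line_norm p A j : mxmeasure_term p A j <= line_norm p A j.
Proof. by case: p; rewrite /= [X in _ <= X](bigD1 j) //= lerD2r ler_norm. Qed.

Lemma mxmeasure_term_line_norm p A j : 0 <= A j j ->
  mxmeasure_term p A j = line_norm p A j.
Proof. by move=> Ajj_ge0; case: p; rewrite /= [RHS](bigD1 j) //= ger0_norm. Qed.

Lemma mxmeasure_le0_of_indnorm_shift p A g :
  indnorm p (A + g%:M) <= g -> mxmeasure p A <= 0.
Proof.
move=> Ag; apply/mxmeasure_le0P => j; rewrite -(lerD2r g) add0r -mxmeasure_term_shift.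
apply: le_trans (mxmeasure_term_le_line_norm _ _ _) _.
exact: le_trans (line_norm_le_indnorm _ _ _) Ag.
Qed.

Lemma indnorm_shift_le p A g : 0 <= g -> (forall j, - g <= A j j) ->
  mxmeasure p A <= 0 -> indnorm p (A + g%:M) <= g.
Proof.
move=> g_ge0 Adiag /mxmeasure_le0P A_le0; apply/indnorm_leP => // j.
rewrite -mxmeasure_term_line_norm; last by rewrite !mxE eqxx mulr1n -lerBlDr sub0r.
by rewrite mxmeasure_term_shift gerDr.
Qed.

End MatrixMeasure.

Section LipschitzJacobian.
Variables (R : realType) (n : nat).
Implicit Types (p : pnorm) (x y v : 'rV[R]_n) (f : 'rV[R]_n -> 'rV[R]_n) (L a : R).

Lemma lipschitz_map_ge0 p f : lipschitz_map p f ->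
  exists2 L, 0 <= L & forall x y, vnorm p (f x - f y) <= L * vnorm p (x - y).
Proof.
case=> L fL; exists (Num.max L 0) => [|x y]; first by rewrite le_max lexx orbT.
by apply: le_trans (fL x y) _; rewrite ler_wpM2r ?vnorm_ge0 // le_max lexx.
Qed.

Lemma lipschitz_map_addZ p a f : lipschitz_map p f ->
  lipschitz_map p (fun x => a *: x + f x).
Proof.
case=> L fL; exists (`|a| + L) => x y; rewrite opprD addrACA -scalerBr mulrDl.
by apply: le_trans (ler_vnormD _ _ _) _; apply: lerD; [apply: ler_vnormZ | apply: fL].
Qed.

Lemma JacE f x i j : Jac f x i j = 'd f x (delta_mx 0 j) ord0 i.
Proof. by rewrite !mxE. Qed.

Lemma Jac_addZ a f x : differentiable f x ->
  Jac (fun y => a *: y + f y) x = Jac f x + a%:M.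
Proof.
move=> f_diff; apply/matrixP => i j.
have dZ : 'd ( *:%R a) x = *:%R a :> ('rV[R]_n -> 'rV[R]_n) by apply: diff_val.
have dD : 'd ( *:%R a + f) x = 'd ( *:%R a) x \+ 'd f x :> ('rV[R]_n -> 'rV[R]_n).
  exact: diffD.
rewrite JacE (congr1 (fun h : 'rV[R]_n -> 'rV[R]_n => h 'e_j ord0 i) dD) /=.
rewrite (congr1 (fun h : 'rV[R]_n -> 'rV[R]_n => (h 'e_j + 'd f x 'e_j) ord0 i) dZ) /=.
rewrite [LHS]mxE [RHS]mxE JacE addrC; congr (_ + _).
by rewrite !mxE eq_sym mulr_natr.
Qed.

Lemma normr_diff_coord_le p f L x v k : 0 <= L ->
  (forall x y, vnorm p (f x - f y) <= L * vnorm p (x - y)) ->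
  differentiable f x -> `|'d f x v ord0 k| <= L * vnorm p v.
Proof.
move=> L_ge0 fL f_diff; rewrite -deriveE //.
have quot_cvg : (fun h : R => h^-1 *: (f (h *: v + x) - f x)) @ 0^' --> 'D_v f x.
  exact: (diff_derivable (v:=v) f_diff).
have := cvg_norm (cvg_comp _ _ quot_cvg (@coord_continuous R 1 n ord0 k ('D_v f x))).
move=> /(_ (dnbhs_filter 0)) /cvgr_to_le; apply; near=> h.
have h_neq0 : h != 0 by near: h; exact: nbhs_dnbhs_neq.
rewrite /= mxE normrM normfV ler_pdivrMl ?normr_gt0 // mulrCA.
apply: le_trans (ler_coord_vnorm _ _ _) _; apply: le_trans (fL _ _) _.
by rewrite addrK ler_wpM2l // ler_vnormZ.
Unshelve. all: by end_near.
Qed.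

Lemma normr_Jac_le p f L x i j : 0 <= L ->
  (forall x y, vnorm p (f x - f y) <= L * vnorm p (x - y)) ->
  differentiable f x -> `|Jac f x i j| <= L.
Proof.
move=> L_ge0 fL f_diff; rewrite JacE.
apply: le_trans (normr_diff_coord_le _ _ L_ge0 fL f_diff) _.
by rewrite ler_piMr // vnorm_delta_le1.
Qed.

Lemma WICP p f : WIC p f <-> forall x, mxmeasure p (Jac f x) <= 0.
Proof.
split=> [f_wic x|f_le0]; last by apply: ge_ereal_sup => _ [x _ <-]; rewrite lee_fin.
by rewrite -lee_fin; apply: le_trans f_wic; apply: ereal_sup_ubound; exists x.
Qed.

Lemma lipconst_leP p f g :
  (lipconst p f <= g%:E)%E <-> forall x, indnorm p (Jac f x) <= g.
Proof.
split=> [f_le x|f_le]; last by apply: ge_ereal_sup => _ [x _ <-]; rewrite lee_fin.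
by rewrite -lee_fin; apply: le_trans f_le; apply: ereal_sup_ubound; exists x.
Qed.

End LipschitzJacobian.

Theorem mainTheorem1 (R : realType) (n : nat) (p : pnorm)
    (f : 'rV[R]_n -> 'rV[R]_n) :
  lipschitz_map p f -> differentiable_everywhere f ->
  (WIC p f <->
   exists (gamma : R) (phi : 'rV[R]_n -> 'rV[R]_n),
     [/\ differentiable_everywhere phi, lipschitz_map p phi,
         (lipconst p phi <= gamma%:E)%E
       & forall x, f x = - gamma *: x + phi x]).
Proof.
move=> f_lip f_diff; rewrite WICP; split.
  have [L L_ge0 fL] := lipschitz_map_ge0 f_lip.
  move=> f_le0; exists L, (fun x => L *: x + f x); split.
  - by move=> x; apply: differentiableD.
  - exact: lipschitz_map_addZ.
  - apply/lipconst_leP => x; rewrite Jac_addZ //.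
    apply: indnorm_shift_le => // j.
    by have := normr_Jac_le j j L_ge0 fL (f_diff x); rewrite ler_norml => /andP[].
  - by move=> x; rewrite addrA -scalerDl addNr scale0r add0r.
move=> [gamma [phi [phi_diff _ /lipconst_leP phi_le fE]]] x.
have -> : f = fun y => - gamma *: y + phi y by apply/funext.
apply: (@mxmeasure_le0_of_indnorm_shift _ _ _ _ gamma).
by rewrite Jac_addZ // raddfN subrK phi_le.
Qed.
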